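(* Let $f:\mathbb{N}\to\mathbb{R}$ with $f(1)=1$. Assume there exist an integer $N\geq2$, $C>0$ and $\gamma\in\mathbb{R}$ such that $f(n)=0$ for all $n\geq N+1$ and $|f(n)|\leq Cn^\gamma$ for all $n\leq N$. Then $$|f^{-1}(n)|\leq n^{\gamma+\varsigma}, \quad n\geq2,$$ where $\varsigma>0$ is the unique root of $\sum_{m=2}^{N} m^{-s} = \frac{1}{C}$.
   Context: $f^{-1}$ denotes the Dirichlet inverse of $f$: the arithmetic function with $\sum_{d\mid n} f(n/d) f^{-1}(d)=\varepsilon(n)$ for all $n$, where $\varepsilon(1)=1$ and $\varepsilon(n)=0$ for $n\ge2$. *)

From HB Require Import structures.
From mathcomp Require Import all_boot all_order all_algebra.
From mathcomp Require Import all_classical all_reals all_analysis.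
Set Implicit Arguments. Unset Strict Implicit. Unset Printing Implicit Defensive.
Import Order.TTheory GRing.Theory Num.Theory.
Local Open Scope ring_scope.

(* Dirichlet convolution on arithmetic functions nat -> R (only n >= 1 matter). *)
Definition dirichlet_conv (R : ringType) (f g : nat -> R) (n : nat) : R :=
  \sum_(d <- divisors n) f (n %/ d)%N * g d.

Definition eps_arith (R : ringType) (n : nat) : R := (n == 1)%N%:R.

Definition is_dirichlet_inverse (R : ringType) (f g : nat -> R) : Prop :=
  forall n : nat, (0 < n)%N -> dirichlet_conv f g n = eps_arith R n.

From HB Require Import structures.
From mathcomp Require Import all_boot all_order all_algebra.
From mathcomp Require Import all_classical all_reals all_analysis.
From mathcomp Require Import ring.
Import Order.TTheory GRing.Theory Num.Theory.
Local Open Scope ring_scope.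

(* Since f 1 = 1, the inverse satisfies
   f^-1(n) = - sum_{d | n, d < n} f(n/d) f^-1(d) for n >= 2.  Writing m = n/d,
   the bounds |f m| <= C m^gamma and |f^-1(d)| <= d^(gamma+vs) turn each term
   into at most C n^(gamma+vs) m^(-vs); the codivisors m are distinct and lie
   in [2, N] (the others vanish), so the sum is at most
   C n^(gamma+vs) sum_{m=2}^N m^(-vs) = n^(gamma+vs). *)

Section DirichletInverseRecursion.

Context {R : ringType} {f g : nat -> R}.
Hypotheses (f1 : f 1%N = 1) (fg : is_dirichlet_inverse f g).

Lemma dirichlet_inverse1 : g 1%N = 1.
Proof.
by move: (@fg 1%N isT); rewrite /dirichlet_conv big_seq1 divnn /= f1 mul1r.
Qed.

Lemma dirichlet_inverse_rec n : (1 < n)%N ->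
  g n = - \sum_(d <- divisors n | d != n) f (n %/ d)%N * g d.
Proof.
move=> n_gt1; have n_gt0 : (0 < n)%N := ltnW n_gt1.
have := @fg n n_gt0; rewrite /dirichlet_conv (bigD1_seq n) ?divisors_id ?divisors_uniq //.
rewrite divnn n_gt0 f1 mul1r /eps_arith gtn_eqF //= => /eqP.
by rewrite addr_eq0 => /eqP.
Qed.

End DirichletInverseRecursion.

Lemma divn_divisors_inj n : (0 < n)%N -> {in divisors n &, injective (divn n)}.
Proof.
move=> n_gt0 d1 d2; rewrite -!dvdn_divisors // => /divnK e1 /divnK e2 q12.
have q_gt0 : (0 < n %/ d1)%N by move: n_gt0; rewrite -{1}e1 muln_gt0 => /andP[].
by apply/eqP; rewrite -(eqn_pmul2l q_gt0) {2}q12 e1 e2.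
Qed.

Lemma divn_divisor_gt1 n d : (0 < n)%N -> d \in divisors n -> d != n ->
  (1 < n %/ d)%N.
Proof.
move=> n_gt0; rewrite -dvdn_divisors // => /divnK nE d_neq_n.
case: (n %/ d)%N nE => [|[|q]] // nE.
  by rewrite -nE mul0n in n_gt0.
by rewrite -nE mul1n eqxx in d_neq_n.
Qed.

Lemma ler_sum_subset (R : numDomainType) (I : eqType) (s t : seq I) (F : I -> R) :
  uniq s -> uniq t -> {subset s <= t} -> {in t, forall i, 0 <= F i} ->
  \sum_(i <- s) F i <= \sum_(i <- t) F i.
Proof.
move=> s_uniq t_uniq st F_ge0.
rewrite [X in _ <= X](bigID (mem s)) /= -[X in _ <= X + _]big_filter.
have E : perm_eq [seq i <- t | i \in s] s.
  apply: uniq_perm; rewrite ?filter_uniq // => i.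
  by rewrite mem_filter andb_idr //; apply: st.
by rewrite (perm_big _ E) lerDl big_seq_cond sumr_ge0 // => i /andP[/F_ge0].
Qed.

Lemma sum_proper_codivisors_le {R : numDomainType} (G : nat -> R) (n N : nat) :
  (0 < n)%N -> (forall m, 0 <= G m) ->
  \sum_(d <- divisors n | (d != n) && (n %/ d <= N)%N) G (n %/ d)%N
    <= \sum_(2 <= m < N.+1) G m.
Proof.
move=> n_gt0 G_ge0.
rewrite -big_filter -(big_map (divn n) xpredT) /=.
apply: ler_sum_subset; last by move=> m _; apply: G_ge0.
- rewrite map_inj_in_uniq ?filter_uniq ?divisors_uniq // => d1 d2.
  rewrite !mem_filter => /andP[_ d1n] /andP[_ d2n].
  exact: divn_divisors_inj.
- exact: iota_uniq.
- move=> m /mapP[d]; rewrite mem_filter => /andP[/andP[d_neq_n dN] d_div] ->.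
  by rewrite mem_index_iota divn_divisor_gt1 ?ltnS.
Qed.

Lemma powR_mul_split (R : realType) (x y a b : R) : 0 < x -> 0 <= y ->
  x `^ a * y `^ (a + b) = (x * y) `^ (a + b) * x `^ (- b).
Proof.
move=> x_gt0 y_ge0.
have xb_neq0 : x `^ b != 0 by rewrite gt_eqF // powR_gt0.
rewrite (powRM _ (ltW x_gt0) y_ge0) powRN (@powRD _ x) ?lt0r_neq0 ?implybT //.
by field.
Qed.

Section DirichletInverseBound.

Context {R : realType} {f g : nat -> R} {N : nat} {C gamma vs : R}.
Hypotheses (f1 : f 1%N = 1) (C_gt0 : 0 < C)
  (f_vanish : forall n, (N < n)%N -> f n = 0)
  (f_le : forall n, (1 <= n <= N)%N -> `|f n| <= C * n%:R `^ gamma)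
  (fg : is_dirichlet_inverse f g)
  (vs_sum : \sum_(2 <= m < N.+1) m%:R `^ (- vs) = C^-1).

Lemma dirichlet_inverse_term_le n d :
  (d %| n)%N -> (1 < n %/ d <= N)%N -> `|g d| <= d%:R `^ (gamma + vs) ->
  `|f (n %/ d)%N * g d| <= C * n%:R `^ (gamma + vs) * (n %/ d)%:R `^ (- vs).
Proof.
move=> /divnK nE /andP[q_gt1 qN] gd_le.
rewrite -{2}nE natrM -mulrA -powR_mul_split ?ltr0n ?(ltnW q_gt1) // mulrA normrM.
by apply: ler_pM => //; apply: f_le; rewrite qN ltnW.
Qed.

Lemma dirichlet_inverse_le n : (0 < n)%N -> `|g n| <= n%:R `^ (gamma + vs).
Proof.
elim/ltn_ind: n => n IH n_gt0.
have [n_gt1|n_le1] := ltnP 1 n; last first.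
  have -> : n = 1%N by apply/eqP; rewrite eqn_leq n_le1.
  by rewrite (dirichlet_inverse1 f1 fg) powR1 normr1.
set bound := C * n%:R `^ (gamma + vs).
have bound_ge0 : 0 <= bound by rewrite mulr_ge0 ?powR_ge0 ?ltW.
rewrite (dirichlet_inverse_rec f1 fg _ n_gt1) normrN.
apply: le_trans (ler_norm_sum _ _ _) _.
apply: (@le_trans _ _ (\sum_(d <- divisors n | d != n)
    if (n %/ d <= N)%N then bound * (n %/ d)%:R `^ (- vs) else 0)).
  rewrite big_seq_cond [X in _ <= X]big_seq_cond; apply: ler_sum => d /andP[d_div d_neq_n].
  have d_dvd : (d %| n)%N by rewrite dvdn_divisors.
  have d_lt_n : (d < n)%N by rewrite ltn_neqAle d_neq_n dvdn_leq.
  have d_gt0 : (0 < d)%N := dvdn_gt0 n_gt0 d_dvd.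
  case: ifP => [qN | /negbT]; last by rewrite -ltnNge => /f_vanish ->; rewrite mul0r normr0.
  apply: dirichlet_inverse_term_le; rewrite ?IH // qN andbT.
  exact: divn_divisor_gt1.
rewrite -big_mkcondr -mulr_sumr.
have codiv_le := sum_proper_codivisors_le (fun m => m%:R `^ (- vs)) n N n_gt0
  (fun m => powR_ge0 _ _).
apply: le_trans (ler_wpM2l bound_ge0 codiv_le) _.
by rewrite vs_sum /bound mulrAC mulfV ?mul1r ?gt_eqF.
Qed.

End DirichletInverseBound.

Theorem proposition3p16 (R : realType) (f finv : nat -> R) (N : nat) (C gamma vs : R) :
  f 1%N = 1 ->
  (2 <= N)%N ->
  0 < C ->
  (forall n : nat, (N < n)%N -> f n = 0) ->
  (forall n : nat, (1 <= n <= N)%N -> `|f n| <= C * (n%:R `^ gamma)) ->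
  is_dirichlet_inverse f finv ->
  0 < vs ->
  \sum_(2 <= m < N.+1) (m%:R `^ (- vs)) = C^-1 ->
  forall n : nat, (2 <= n)%N -> `|finv n| <= n%:R `^ (gamma + vs).
Proof.
(* [2 <= N] and [0 < vs] only make [vs] well defined; its defining equation suffices. *)
move=> f1 _ C_gt0 f_vanish f_le fg _ vs_sum n n_ge2.
exact: dirichlet_inverse_le f1 C_gt0 f_vanish f_le fg vs_sum n (ltnW n_ge2).
Qed.
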